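(* Let $k\ge1$ and suppose $\delta\notin\bigcup_{j=1}^kI_j$, where $I_j=\{-\frac{p}{2(n+1)}:p\in\{j-1,\dots,2j-2\}\}$. Then \[R^k=\bigoplus_{l=0}^k s^l\big(R^{k-l}\cap\ker i(\alpha)\big),\] where $s^l:R^{k-l}\to R^k$ denotes the composite $s_{k-1}\circ s_{k-2}\circ\cdots\circ s_{k-l}$ ($s^0=\mathrm{Id}$), and for $j\ge1$, $s_{j-1}:R^{j-1}\to R^j$ is $s_{j-1}(S)=-\sum_{l=1}^jb_{j,l}X^l(i(\alpha)^{l-1}(S))$ with $b_{j,l}=\big(\prod_{m=1}^l(-r(m,j-m))\big)^{-1}$.
   Context: Let $n\ge1$, $M=\mathbb{R}^{2n+1}$ with coordinates $(q^1,\dots,q^n,p^1,\dots,p^n,t)$. For $\mu\in\mathbb{R}$, $\mathcal{S}^k_\mu$ denotes the space of smooth functions $S(x,\xi)$ on $M\times\mathbb{R}^{2n+1}$ homogeneous polynomial of degree $k$ in $\xi=(\xi_{q^1},\dots,\xi_{q^n},\xi_{p^1},\dots,\xi_{p^n},\xi_t)$. Fix $\delta\in\mathbb{R}$ and set $R^k=\mathcal{S}^k_{\delta+\frac{k}{n+1}}$ for $k\ge0$, $R^{j}=0$ for $j<0$. Let $E_s=\sum_i(p^i\partial_{p^i}+q^i\partial_{q^i})$, $\langle E_s,\xi\rangle=\sum_i(p^i\xi_{p^i}+q^i\xi_{q^i})$, $D(S)=\sum_i(\xi_{q^i}\partial_{p^i}S-\xi_{p^i}\partial_{q^i}S)+\xi_tE_s(S)-\langle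 E_s,\xi\rangle\partial_tS$. Operators: $i(\alpha):R^k\to R^{k-1}$, $i(\alpha)(S)=\frac12\big(\sum_i(p^i\partial_{\xi_{q^i}}S-q^i\partial_{\xi_{p^i}}S)-\partial_{\xi_t}S\big)$; $X:R^k\to R^{k+1}$, $X(S)=D(S)+(2(n+1)\delta+k)\xi_tS$. Set $r(l,k)=-\frac{l}{2}\big(2(n+1)\delta+2k+l-1\big)$. *)

From HB Require Import structures.
From mathcomp Require Import all_boot all_order all_algebra.
From mathcomp Require Import all_classical all_reals all_analysis.
Set Implicit Arguments. Unset Strict Implicit. Unset Printing Implicit Defensive.
Import Order.TTheory GRing.Theory Num.Theory.
Import numFieldNormedType.Exports.
Local Open Scope ring_scope.

Section Symbols.
Variables (R : realType) (n : nat) (delta : R).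

(* dimension of M = R^{2n+1}; coordinates (q^1..q^n, p^1..p^n, t) *)
Definition dimM := (2 * n).+1.
Definition pt := 'rV[R]_dimM.
(* a symbol S(x, xi), x in M, xi in R^{2n+1} (the fibre coordinates) *)
Definition sym := pt -> pt -> R.

Definition qi (i : 'I_n) : 'I_dimM := inord i.
Definition pi_ (i : 'I_n) : 'I_dimM := inord (n + i).
Definition ti : 'I_dimM := inord (2 * n).

Definition ev (j : 'I_dimM) : pt := delta_mx 0 j.

Definition dx (j : 'I_dimM) (S : sym) : sym :=
  fun x xi => derive (fun y => S y xi) x (ev j).
Definition dxi (j : 'I_dimM) (S : sym) : sym :=
  fun x xi => derive (fun z => S x z) xi (ev j).

Definition pder (l : seq 'I_dimM) (f : pt -> R) : pt -> R :=
  foldr (fun j g => fun y => derive g y (ev j)) f l.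

Definition smooth (f : pt -> R) : Prop :=
  forall (l : seq 'I_dimM) (x : pt), differentiable (pder l f) x.

(* This is the space S^k_mu (for any weight mu), hence R^k for k >= 0. *)
Definition inR (k : nat) (S : sym) : Prop :=
  exists c : {ffun 'I_dimM -> 'I_k.+1} -> pt -> R,
    (forall a, smooth (c a)) /\
    forall x xi, S x xi =
      \sum_(a : {ffun 'I_dimM -> 'I_k.+1} | (\sum_i (a i : nat) == k)%N)
         c a x * \prod_i xi 0 i ^+ a i.

Definition Es (S : sym) : sym := fun x xi =>
  \sum_(i < n) (x 0 (pi_ i) * dx (pi_ i) S x xi + x 0 (qi i) * dx (qi i) S x xi).
Definition Esxi (x xi : pt) : R :=
  \sum_(i < n) (x 0 (pi_ i) * xi 0 (pi_ i) + x 0 (qi i) * xi 0 (qi i)).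

Definition Dop (S : sym) : sym := fun x xi =>
  \sum_(i < n) (xi 0 (qi i) * dx (pi_ i) S x xi - xi 0 (pi_ i) * dx (qi i) S x xi)
  + xi 0 ti * Es S x xi - Esxi x xi * dx ti S x xi.

Definition ialpha (S : sym) : sym := fun x xi =>
  2^-1 * (\sum_(i < n) (x 0 (pi_ i) * dxi (qi i) S x xi
                        - x 0 (qi i) * dxi (pi_ i) S x xi)
          - dxi ti S x xi).

(* X : R^m -> R^{m+1} *)
Definition Xop (m : nat) (S : sym) : sym := fun x xi =>
  Dop S x xi + (2 * (n.+1)%:R * delta + m%:R) * xi 0 ti * S x xi.

(* X^l on R^m : X_{m+l-1} o ... o X_m *)
Fixpoint Xit (m l : nat) (S : sym) : sym :=
  match l with
  | 0 => S
  | l'.+1 => Xop (m + l') (Xit m l' S)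
  end.

Definition r (l k : nat) : R :=
  - (l%:R / 2) * (2 * (n.+1)%:R * delta + 2 * k%:R + l%:R - 1).

Definition b (j l : nat) : R :=
  (\prod_(1 <= m < l.+1) (- r m (j - m)))^-1.

(* sop j = s_{j-1} : R^{j-1} -> R^j *)
Definition sop (j : nat) (S : sym) : sym := fun x xi =>
  - \sum_(1 <= l < j.+1) b j l * Xit (j - l) l (iter l.-1 ialpha S) x xi.

(* scomp m l = s_{m+l-1} o ... o s_m : R^m -> R^{m+l};
   the paper's s^l : R^{k-l} -> R^k is scomp (k-l) l *)
Fixpoint scomp (m l : nat) (S : sym) : sym :=
  match l with
  | 0 => S
  | l'.+1 => sop (m + l').+1 (scomp m l' S)
  end.

End Symbols.

From Pilot Require Import Defs.
From HB Require Import structures.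
From mathcomp Require Import all_boot all_order all_algebra.
From mathcomp Require Import all_classical all_reals all_analysis.
From mathcomp Require Import ring zify.
Import Order.TTheory GRing.Theory Num.Theory.
Import numFieldNormedType.Exports.
Local Open Scope ring_scope.
Set Implicit Arguments. Unset Strict Implicit.

(* i(alpha) lowers the xi-degree by one and X raises it by one.  Writing D and
   i(alpha) as first-order operators and using Euler's identity on R^k gives the
   commutation relation i(alpha) X S = X i(alpha) S + r(1,k) S, hence
   i(alpha) X^l = X^l i(alpha) + r(l,m) X^(l-1) on R^m.  With the coefficients
   b_{j,l} the expression i(alpha) s_{j-1} S telescopes to S, provided
   r(l, j-l) <> 0 for 1 <= l <= j, which is exactly delta \notin I_j.  Then
   S = (S - s_{k-1} i(alpha) S) + s_{k-1} (i(alpha) S) with a primitive first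
   term, and decomposing i(alpha) S in R^(k-1) by induction shows that the
   summands span.  Applying i(alpha) to a vanishing sum turns each s^l into
   s^(l-1) and kills the primitive term, so directness follows by induction too. *)

Section Calculus.
Variables (R : realType) (n : nat).
Local Notation pt := (pt R n).
Local Notation I := ('I_(dimM n)).
Local Notation ev := (@ev R n).

Lemma evE (j i : I) : ev j 0 i = (i == j)%:R.
Proof. by rewrite /Defs.ev mxE eqxx. Qed.

Lemma is_derive_coord (i : I) (a v : pt) :
  is_derive a v (fun z : pt => z 0 i) (v 0 i).
Proof.
have coord_linear : linear (fun z : pt => z 0 i) by move=> c u w; rewrite !mxE.
pose f : {linear pt -> R^o} := HB.pack (fun z : pt => z 0 i : R^o)
   (GRing.isLinear.Build _ _ _ _ _ coord_linear).
have df : differentiable (f : pt -> R^o) a by exact: differentiable_coord.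
apply: DeriveDef; first exact: diff_derivable.
rewrite deriveE // -[fun z : pt => z 0 i]/(f : pt -> R^o) diff_lin //.
exact: coord_continuous.
Qed.

Lemma derivable_coord (i : I) (a v : pt) : derivable (fun z : pt => z 0 i) a v.
Proof. exact: (@ex_derive _ _ _ _ _ _ _ (is_derive_coord i a v)). Qed.

Lemma derive_coord (i : I) (a v : pt) : derive (fun z : pt => z 0 i) a v = v 0 i.
Proof. exact: (@derive_val _ _ _ _ _ _ _ (is_derive_coord i a v)). Qed.

Lemma derive_fmul (f g : pt -> R) x v : derivable f x v -> derivable g x v ->
  derive (fun y => f y * g y) x v = f x * derive g x v + g x * derive f x v.
Proof. exact: deriveM. Qed.

Lemma derivable_powf (f : pt -> R) m x v : derivable f x v ->
  derivable (fun y => f y ^+ m) x v.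
Proof.
move=> h; have -> : (fun y => f y ^+ m) = f ^+ m by rewrite funeqE => y; rewrite exprfctE.
exact: derivableX.
Qed.

Lemma derive_powf (f : pt -> R) m x v : derivable f x v ->
  derive (fun y => f y ^+ m) x v = m%:R * f x ^+ m.-1 * derive f x v.
Proof.
move=> h; have -> : (fun y => f y ^+ m) = f ^+ m by rewrite funeqE => y; rewrite exprfctE.
by rewrite deriveX.
Qed.

Lemma derivable_bigsum (T : Type) (s : seq T) (P : pred T) (F : T -> pt -> R) x v :
  (forall t, P t -> derivable (F t) x v) ->
  derivable (fun y => \sum_(t <- s | P t) F t y) x v.
Proof.
have -> : (fun y => \sum_(t <- s | P t) F t y) = \sum_(t <- s | P t) F t.
  by rewrite fct_sumE.
move=> hF; apply: (big_ind (fun g : pt -> R => derivable g x v)).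
- exact: derivable_cst.
- by move=> g h; exact: derivableD.
- exact: hF.
Qed.

Lemma derive_bigsum (T : Type) (s : seq T) (P : pred T) (F : T -> pt -> R) x v :
  (forall t, P t -> derivable (F t) x v) ->
  derive (fun y => \sum_(t <- s | P t) F t y) x v =
    \sum_(t <- s | P t) derive (F t) x v.
Proof.
have -> : (fun y => \sum_(t <- s | P t) F t y) = \sum_(t <- s | P t) F t.
  by rewrite fct_sumE.
move=> hF; elim: s => [|t s IH]; first by rewrite !big_nil derive_cst.
rewrite !big_cons; case: ifP => Pt //; rewrite deriveD ?IH //; first exact: hF.
by rewrite fct_sumE; exact: derivable_bigsum.
Qed.

Lemma derivable_bigprod (T : Type) (s : seq T) (P : pred T) (F : T -> pt -> R) x v :
  (forall t, P t -> derivable (F t) x v) ->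
  derivable (fun y => \prod_(t <- s | P t) F t y) x v.
Proof.
have -> : (fun y => \prod_(t <- s | P t) F t y) = \prod_(t <- s | P t) F t.
  by rewrite fct_prodE.
move=> hF; apply: (big_ind (fun g : pt -> R => derivable g x v)).
- exact: derivable_cst.
- by move=> g h; exact: derivableM.
- exact: hF.
Qed.

Lemma derive_bigprod_eq0 (T : Type) (s : seq T) (P : pred T) (F : T -> pt -> R) x v :
  (forall t, P t -> derivable (F t) x v) ->
  (forall t, P t -> derive (F t) x v = 0) ->
  derive (fun y => \prod_(t <- s | P t) F t y) x v = 0.
Proof.
have -> : (fun y => \prod_(t <- s | P t) F t y) = \prod_(t <- s | P t) F t.
  by rewrite fct_prodE.
move=> hF h0; elim: s => [|t s IH]; first by rewrite big_nil derive_cst.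
rewrite big_cons; case: ifP => Pt //.
rewrite deriveM ?IH ?h0 ?scaler0 ?add0r //; first exact: hF.
by rewrite fct_prodE; exact: derivable_bigprod.
Qed.

Definition smooth_upto (m : nat) (f : pt -> R) :=
  forall l : seq I, (size l <= m)%N -> forall x, differentiable (pder l f) x.

Lemma smooth_uptoP (f : pt -> R) : smooth f <-> forall m, smooth_upto m f.
Proof. by split=> [h m l _ | h l]; [exact: h | exact: (h (size l))]. Qed.

Lemma pder_rcons j l (f : pt -> R) :
  pder (rcons l j) f = pder l (fun y => derive f y (ev j)).
Proof. by rewrite /pder foldr_rcons. Qed.

Lemma smooth_differentiable (f : pt -> R) x : smooth f -> differentiable f x.
Proof. by move=> h; exact: (h [::] x). Qed.

Lemma smooth_derivable (f : pt -> R) x v : smooth f -> derivable f x v.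
Proof. by move=> h; apply: diff_derivable; exact: smooth_differentiable. Qed.

Lemma smooth_derive (f : pt -> R) j : smooth f -> smooth (fun y => derive f y (ev j)).
Proof. by move=> h l x; rewrite -pder_rcons; exact: h. Qed.

Lemma pderD_upto m (f g : pt -> R) : smooth_upto m f -> smooth_upto m g ->
  forall l : seq I, (size l <= m.+1)%N ->
  pder l (fun y => f y + g y) = fun y => pder l f y + pder l g y.
Proof.
move=> hf hg; elim=> [//|j l IH] /= hs; rewrite IH; last by apply: leqW.
rewrite funeqE => y.
by rewrite deriveD //; apply: diff_derivable; [exact: hf | exact: hg].
Qed.

Lemma smooth_uptoD m (f g : pt -> R) : smooth_upto m f -> smooth_upto m g ->
  smooth_upto m (fun y => f y + g y).
Proof.
move=> hf hg l hl x; rewrite (pderD_upto hf hg) ?(leqW hl) //.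
by apply: differentiableD; [exact: hf | exact: hg].
Qed.

Lemma smoothD (f g : pt -> R) : smooth f -> smooth g -> smooth (fun y => f y + g y).
Proof.
move=> /smooth_uptoP hf /smooth_uptoP hg; apply/smooth_uptoP => m.
exact: smooth_uptoD.
Qed.

Lemma pderZ c (f : pt -> R) : smooth f -> forall l : seq I,
  pder l (fun y => c * f y) = fun y => c * pder l f y.
Proof.
move=> hf; elim=> [//|j l IH] /=; rewrite IH funeqE => y.
by rewrite deriveMl //; apply: diff_derivable; exact: hf.
Qed.

Lemma smoothZ c (f : pt -> R) : smooth f -> smooth (fun y => c * f y).
Proof.
move=> hf l x; rewrite pderZ //.
have -> : (fun y => c * pder l f y) = (fun=> c) * pder l f by [].
by apply: differentiableM; [exact: differentiable_cst | exact: hf].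
Qed.

Lemma pder_cst (c : R) (l : seq I) :
  pder l (fun _ : pt => c) = fun _ => if l is [::] then c else 0.
Proof. by elim: l => [//|j l IH] /=; rewrite IH funeqE => y; exact: derive_cst. Qed.

Lemma smooth_cst (c : R) : smooth (fun _ : pt => c).
Proof. by move=> l x; rewrite pder_cst; exact: differentiable_cst. Qed.

Lemma smooth_coord (i : I) : smooth (fun z : pt => z 0 i).
Proof.
move=> l x; case/lastP: l => [|l j]; first exact: differentiable_coord.
rewrite pder_rcons (_ : (fun y => _) = fun _ => ev j 0 i); first exact: smooth_cst.
by rewrite funeqE => y; rewrite derive_coord.
Qed.

Lemma smooth_uptoM m : forall f g : pt -> R, smooth f -> smooth g ->
  smooth_upto m (fun y => f y * g y).
Proof.
elim: m => [|m IH] f g hf hg l hl x.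
  case: l hl => // _ /=; have -> : (fun y => f y * g y) = f * g by [].
  by apply: differentiableM; exact: smooth_differentiable.
case/lastP: l hl => [|l j] hl.
  have -> : pder [::] (fun y => f y * g y) = f * g by [].
  by apply: differentiableM; exact: smooth_differentiable.
rewrite size_rcons ltnS in hl; rewrite pder_rcons.
rewrite (_ : (fun y => _) = fun y => f y * derive g y (ev j) + g y * derive f y (ev j)).
  have hfg := IH f _ hf (smooth_derive j hg); have hgf := IH g _ hg (smooth_derive j hf).
  rewrite (pderD_upto hfg hgf) ?(leqW hl) //.
  by apply: differentiableD; [exact: hfg | exact: hgf].
by rewrite funeqE => y; rewrite deriveM //; exact: smooth_derivable.
Qed.

Lemma smoothM (f g : pt -> R) : smooth f -> smooth g -> smooth (fun y => f y * g y).
Proof. by move=> hf hg; apply/smooth_uptoP => m; exact: smooth_uptoM. Qed.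

End Calculus.

Section PolynomialSymbols.
Variables (R : realType) (n : nat).
Local Notation pt := (pt R n).
Local Notation sym := (sym R n).
Local Notation I := ('I_(dimM n)).
Local Notation ev := (@ev R n).
Local Notation inR := (@inR R n).

Definition mono (e : I -> nat) (z : pt) : R := \prod_(i : I) z 0 i ^+ e i.

Lemma derivable_mono e x v : derivable (mono e) x v.
Proof.
apply: (@derivable_bigprod _ _ _ _ _ (fun i y => y 0 i ^+ e i)) => i _.
exact/derivable_powf/derivable_coord.
Qed.

Lemma derive_mono e x j :
  derive (mono e) x (ev j) = (e j)%:R * mono (fun i => e i - (i == j))%N x.
Proof.
have -> : mono e = fun y => y 0 j ^+ e j * \prod_(i | i != j) y 0 i ^+ e i.
  by apply: funext => y; rewrite /mono (bigD1 j).
have dpow i : derivable (fun y : pt => y 0 i ^+ e i) x (ev j).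
  exact/derivable_powf/derivable_coord.
have dpow0 i : i != j -> derive (fun y : pt => y 0 i ^+ e i) x (ev j) = 0.
  move=> ij; rewrite derive_powf ?derive_coord ?evE ?(negbTE ij) ?mulr0 //.
  exact: derivable_coord.
rewrite derive_fmul //; last exact: derivable_bigprod.
rewrite derive_bigprod_eq0; last 2 first.
- by move=> i _; exact: dpow.
- by move=> i ij; exact: dpow0.
rewrite derive_powf ?derive_coord ?evE ?eqxx; last exact: derivable_coord.
rewrite mulr0 add0r mulr1 /mono [in RHS](bigD1 j) //= eqxx subn1.
rewrite mulrC -mulrA; congr (_ * (_ * _)).
by apply: eq_bigr => i ij; rewrite (negbTE ij) subn0.
Qed.

Lemma mulxi_mono (e : I -> nat) i (xi : pt) :
  xi 0 i * mono e xi = mono (fun i' => e i' + (i' == i))%N xi.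
Proof.
rewrite /mono (bigD1 i) //= [in RHS](bigD1 i) //= eqxx addn1 exprS mulrA.
by congr (_ * _); apply: eq_bigr => i' ii; rewrite (negbTE ii) addn0.
Qed.

Definition polysym (T : eqType) (s : seq T) (P : pred T) (c : T -> pt -> R)
  (e : T -> I -> nat) : sym := fun x xi => \sum_(t <- s | P t) c t x * mono (e t) xi.

Section Polysym.
Variables (T : eqType) (s : seq T) (P : pred T) (c : T -> pt -> R) (e : T -> I -> nat).

Lemma derivable_polysym_x xi x v : (forall t, P t -> derivable (c t) x v) ->
  derivable (fun y => polysym s P c e y xi) x v.
Proof.
move=> hc; apply: derivable_bigsum => t Pt.
by apply: derivableM; [exact: hc | exact: derivable_cst].
Qed.

Lemma derivable_polysym_xi x xi v : derivable (fun z => polysym s P c e x z) xi v.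
Proof.
apply: derivable_bigsum => t _.
by apply: derivableM; [exact: derivable_cst | exact: derivable_mono].
Qed.

Lemma polysym_dx j : (forall t, P t -> smooth (c t)) ->
  dx j (polysym s P c e) = polysym s P (fun t y => derive (c t) y (ev j)) e.
Proof.
move=> hc; apply: funext => x; apply: funext => xi.
have dc t : P t -> derivable (c t) x (ev j) by move=> Pt; exact/smooth_derivable/hc.
rewrite /dx derive_bigsum => [|t Pt]; last first.
  by apply: derivableM; [exact: dc | exact: derivable_cst].
apply: eq_bigr => t Pt.
rewrite (derive_fmul (dc t Pt) (derivable_cst (mono (e t) xi) x (ev j))).
by rewrite derive_cst mulr0 add0r mulrC.
Qed.

Lemma polysym_dxi j :
  dxi j (polysym s P c e) =
  polysym s P (fun t y => (e t j)%:R * c t y) (fun t i => e t i - (i == j))%N.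
Proof.
apply: funext => x; apply: funext => xi; rewrite /dxi derive_bigsum.
  apply: eq_bigr => t _; rewrite deriveMl ?derive_mono; last exact: derivable_mono.
  by rewrite mulrA [c t x * _]mulrC.
by move=> t _; apply: derivableM; [exact: derivable_cst | exact: derivable_mono].
Qed.

End Polysym.

Lemma inR_ext k (S T : sym) : (forall x xi, S x xi = T x xi) -> inR k T -> inR k S.
Proof. by move=> h [c [hc hT]]; exists c; split => // x xi; rewrite h hT. Qed.

Lemma inR0 k : inR k (fun _ _ => 0).
Proof.
exists (fun _ _ => 0); split; first by move=> a; exact: smooth_cst.
by move=> x xi; rewrite big1 // => a _; rewrite mul0r.
Qed.

Lemma inRD k (S T : sym) : inR k S -> inR k T -> inR k (fun x xi => S x xi + T x xi).
Proof.
move=> [c [hc hS]] [d [hd hT]]; exists (fun a y => c a y + d a y); split.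
  by move=> a; apply: smoothD.
by move=> x xi; rewrite hS hT -big_split /=; apply: eq_bigr => a _; rewrite mulrDl.
Qed.

Lemma inR_mulx k (f : pt -> R) (S : sym) : smooth f -> inR k S ->
  inR k (fun x xi => f x * S x xi).
Proof.
move=> hf [c [hc hS]]; exists (fun a y => f y * c a y); split.
  by move=> a; apply: smoothM.
by move=> x xi; rewrite hS big_distrr /=; apply: eq_bigr => a _; rewrite mulrA.
Qed.

Lemma inRZ k (u : R) (S : sym) : inR k S -> inR k (fun x xi => u * S x xi).
Proof. by move=> h; apply: (@inR_mulx k (fun=> u)) => //; exact: smooth_cst. Qed.

Lemma inRN k (S : sym) : inR k S -> inR k (fun x xi => - S x xi).
Proof. by move=> h; apply: inR_ext (inRZ (-1) h) => x xi; rewrite mulN1r. Qed.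

Lemma inRB k (S T : sym) : inR k S -> inR k T -> inR k (fun x xi => S x xi - T x xi).
Proof. by move=> hS hT; exact: inRD hS (inRN hT). Qed.

Lemma inR_sum k (T : eqType) (s : seq T) (P : pred T) (F : T -> sym) :
  (forall t, t \in s -> P t -> inR k (F t)) ->
  inR k (fun x xi => \sum_(t <- s | P t) F t x xi).
Proof.
elim: s => [|t s IH] hF.
  by apply: inR_ext (inR0 k) => x xi; rewrite big_nil.
have hs t' : t' \in s -> P t' -> inR k (F t').
  by move=> ht'; apply: hF; rewrite inE ht' orbT.
case Pt: (P t).
  apply: inR_ext (inRD (hF t (mem_head _ _) Pt) (IH hs)) => x xi.
  by rewrite big_cons Pt.
by apply: inR_ext (IH hs) => x xi; rewrite big_cons Pt.
Qed.

Lemma inR_mono k (c : pt -> R) (e : I -> nat) : smooth c ->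
  ((\sum_i e i)%N = k \/ forall y, c y = 0) ->
  inR k (fun x xi => c x * mono e xi).
Proof.
move=> hc [he|h0]; last first.
  by apply: inR_ext (inR0 k) => x xi; rewrite h0 mul0r.
have ek i : (e i < k.+1)%N by rewrite ltnS -he (bigD1 i) //=; exact: leq_addr.
pose fe : {ffun I -> 'I_k.+1} := [ffun i => Ordinal (ek i)].
exists (fun a => if a == fe then c else fun=> 0); split.
  by move=> a; case: ifP => _ //; exact: smooth_cst.
move=> x xi; rewrite (bigD1 fe) /=; last first.
  by apply/eqP; rewrite (eq_bigr (fun i => e i)) ?he // => i _; rewrite ffunE.
rewrite eqxx [X in _ + X]big1 ?addr0 => [|a /andP [_ /negbTE ->]]; last by rewrite mul0r.
by congr (_ * _); apply: eq_bigr => i _; rewrite ffunE.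
Qed.

Lemma inR_polysym k (T : eqType) (s : seq T) (P : pred T) (c : T -> pt -> R)
    (e : T -> I -> nat) :
  (forall t, P t -> smooth (c t)) ->
  (forall t, P t -> (\sum_i e t i)%N = k \/ forall y, c t y = 0) ->
  inR k (polysym s P c e).
Proof.
move=> hc he; apply: inR_sum => t _ Pt.
by apply: inR_mono; [exact: hc | exact: he].
Qed.

Definition homsym k (c : {ffun I -> 'I_k.+1} -> pt -> R) : sym :=
  polysym (index_enum {ffun I -> 'I_k.+1}) (fun a => (\sum_i (a i : nat) == k)%N) c
      (fun a i => a i).

Lemma inRP k S : inR k S ->
  exists c : {ffun I -> 'I_k.+1} -> pt -> R, (forall a, smooth (c a)) /\ S = homsym c.
Proof.
by move=> [c [hc hS]]; exists c; split => //; apply: funext => x; apply: funext => xi.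
Qed.

Lemma derivable_inR_x k (S : sym) xi x v : inR k S -> derivable (fun y => S y xi) x v.
Proof.
by move=> /inRP [c [hc ->]]; apply: derivable_polysym_x => t _; exact: smooth_derivable.
Qed.

Lemma derivable_inR_xi k (S : sym) x xi v : inR k S -> derivable (fun z => S x z) xi v.
Proof. by move=> /inRP [c [hc ->]]; exact: derivable_polysym_xi. Qed.

Lemma inR_dx k (S : sym) j : inR k S -> inR k (dx j S).
Proof.
move=> /inRP [c [hc ->]]; rewrite polysym_dx //; apply: inR_polysym.
  by move=> t _; exact: smooth_derive.
by move=> t /eqP ->; left.
Qed.

Lemma inR_dxi k (S : sym) j : inR k S -> inR k.-1 (dxi j S).
Proof.
move=> /inRP [c [hc ->]]; rewrite polysym_dxi; apply: inR_polysym.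
  by move=> t _; exact: smoothZ.
move=> a /eqP ha; case aj: (a j : nat) => [|m]; first by right => y; rewrite mul0r.
left; suff h : (\sum_i (a i : nat))%N = (\sum_i (a i - (i == j))).+1%N.
  by move: h; rewrite ha => /(f_equal predn) /= ->.
rewrite (bigD1 j) //= [in RHS](bigD1 j) //= eqxx aj subn1 /= addSn.
by congr (_ + _).+1; apply: eq_bigr => i ij; rewrite (negbTE ij) subn0.
Qed.

Lemma dxi_inR0 (S : sym) j x xi : inR 0 S -> dxi j S x xi = 0.
Proof.
move=> /inRP [c [hc ->]]; rewrite polysym_dxi /polysym big1 // => a _.
have -> : (a j : nat) = 0%N by case: (a j) => -[].
by rewrite !mul0r.
Qed.

Lemma inR_mulxi k (S : sym) i : inR k S -> inR k.+1 (fun x xi => xi 0 i * S x xi).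
Proof.
move=> /inRP [c [hc ->]].
apply: (@inR_ext _ _ (polysym (index_enum {ffun I -> 'I_k.+1})
   (fun a => (\sum_i (a i : nat) == k)%N) c (fun a i' => a i' + (i' == i))%N)).
  move=> x xi; rewrite /homsym /polysym big_distrr /=; apply: eq_bigr => a _.
  by rewrite mulrCA mulxi_mono.
apply: inR_polysym => // a /eqP ha; left.
by rewrite big_split /= ha (bigD1 i) //= eqxx big1 ?addn0 ?addn1 // => i2 /negbTE ->.
Qed.

Lemma dxi_dx k (S : sym) i j x xi : inR k S ->
  dxi j (dx i S) x xi = dx i (dxi j S) x xi.
Proof.
move=> /inRP [c [hc ->]]; rewrite polysym_dx // !polysym_dxi polysym_dx; last first.
  by move=> t _; exact: smoothZ.
rewrite /polysym; apply: eq_bigr => a _; congr (_ * _).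
by rewrite deriveMl //; exact: smooth_derivable.
Qed.

Lemma euler_inR k (S : sym) (x xi : pt) : inR k S ->
  \sum_(m : I) xi 0 m * dxi m S x xi = k%:R * S x xi.
Proof.
move=> /inRP [c [hc ->]].
under eq_bigr => m _ do rewrite polysym_dxi /polysym big_distrr.
rewrite exchange_big /= /homsym /polysym big_distrr; apply: eq_bigr => a /eqP ha /=.
have key (m : I) : xi 0 m * ((a m : nat)%:R * c a x *
    mono (fun i => (a i - (i == m))%N) xi) = (a m : nat)%:R * (c a x * mono (fun i => a i) xi).
  case am: (a m : nat) => [|p]; first by rewrite !mul0r mulr0.
  have E : (fun i' => (a i' - (i' == m)) + (i' == m))%N = (fun i => (a i : nat)).
    apply: funext => i; case: (eqVneq i m) => [->|im]; first by rewrite am subn1 addn1.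
    by rewrite subn0 addn0.
  by rewrite -E -mulxi_mono; ring.
under eq_bigr => m _ do rewrite key.
by rewrite -big_distrl /= -natr_sum ha mulrA.
Qed.

End PolynomialSymbols.

Section Coordinates.
Variables (R : realType) (n : nat).
Local Notation pt := (pt R n).
Local Notation I := ('I_(dimM n)).
Local Notation ev := (@ev R n).
Local Notation qi := (@qi n).
Local Notation pi_ := (@pi_ n).
Local Notation ti := (@ti n).

Lemma qiE (i : 'I_n) : (qi i : nat) = i.
Proof. by rewrite /Defs.qi inordK // (leq_trans (ltn_ord i)) // /dimM; lia. Qed.

Lemma piE (i : 'I_n) : (pi_ i : nat) = (n + i)%N.
Proof. by rewrite /Defs.pi_ inordK //; have := ltn_ord i; rewrite /dimM; lia. Qed.

Lemma tiE : (ti : nat) = (2 * n)%N.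
Proof. by rewrite /Defs.ti inordK. Qed.

Lemma sum_coords (f : I -> R) :
  \sum_(j : I) f j = \sum_(i < n) f (qi i) + \sum_(i < n) f (pi_ i) + f ti.
Proof.
pose g (m : nat) := f (inord m).
have -> : \sum_(j : I) f j = \sum_(0 <= m < (2 * n).+1) g m.
  by rewrite big_mkord; apply: eq_bigr => j _; rewrite /g inord_val.
rewrite big_nat_recr //= (@big_cat_nat _ _ _ n) //=; last by lia.
have -> : (2 * n = n + n)%N by lia.
have -> : \sum_(n <= m < n + n) g m = \sum_(0 <= m < n) g (m + n)%N.
  by rewrite -{1}[n]add0n big_addn addnK.
have -> : g (n + n)%N = f ti by rewrite /g /Defs.ti; congr (f (inord _)); lia.
rewrite !big_mkord; congr (_ + _ + _).
by apply: eq_bigr => i _; rewrite /g /Defs.pi_ addnC.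
Qed.

(* The vector with q-block fq, p-block fp and t-entry ft. *)
Definition coordvec (fq fp : 'I_n -> R) (ft : R) (j : I) : R :=
  if @insub nat (fun m => (m < n)%N) 'I_n (j : nat) is Some i then fq i
  else if @insub nat (fun m => (m < n)%N) 'I_n (j - n)%N is Some i then fp i
  else ft.

Lemma coordvec_q fq fp ft i : coordvec fq fp ft (qi i) = fq i.
Proof. by rewrite /coordvec qiE valK. Qed.

Lemma coordvec_p fq fp ft i : coordvec fq fp ft (pi_ i) = fp i.
Proof. by rewrite /coordvec piE insubF ?addKn ?valK //; lia. Qed.

Lemma coordvec_t fq fp ft : coordvec fq fp ft ti = ft.
Proof. by rewrite /coordvec tiE !insubF //; lia. Qed.

Lemma coordvec_lin (h : R) fq1 fp1 ft1 fq2 fp2 ft2 fq3 fp3 ft3 :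
  (forall i, fq3 i = h * fq1 i + fq2 i) -> (forall i, fp3 i = h * fp1 i + fp2 i) ->
  ft3 = h * ft1 + ft2 ->
  forall j, coordvec fq3 fp3 ft3 j = h * coordvec fq1 fp1 ft1 j + coordvec fq2 fp2 ft2 j.
Proof.
move=> hq hp ht j; rewrite /coordvec.
by case: insub => [i|]; [exact: hq | case: insub => [i|]; [exact: hp | exact: ht]].
Qed.

Definition cdot (w d : I -> R) := \sum_(j : I) w j * d j.

Lemma eq_cdot (w d1 d2 : I -> R) : (forall j, d1 j = d2 j) -> cdot w d1 = cdot w d2.
Proof. by move=> h; apply: eq_bigr => j _; rewrite h. Qed.

Lemma cdot0 (w : I -> R) : cdot w (fun=> 0) = 0.
Proof. by rewrite /cdot big1 // => j _; rewrite mulr0. Qed.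

Lemma cdot_coordvec fq fp ft d : cdot (coordvec fq fp ft) d =
  \sum_(i < n) fq i * d (qi i) + \sum_(i < n) fp i * d (pi_ i) + ft * d ti.
Proof.
rewrite /cdot sum_coords coordvec_t.
by congr (_ + _ + _); apply: eq_bigr => i _; rewrite ?coordvec_q ?coordvec_p.
Qed.

Lemma cdotD w d1 d2 : cdot w (fun j => d1 j + d2 j) = cdot w d1 + cdot w d2.
Proof. by rewrite /cdot -big_split; apply: eq_bigr => j _; rewrite mulrDr. Qed.

Lemma cdotZ w a d : cdot w (fun j => a * d j) = a * cdot w d.
Proof. by rewrite /cdot big_distrr; apply: eq_bigr => j _; rewrite mulrCA. Qed.

Lemma cdot_sum (T : Type) (s : seq T) (P : pred T) w (F : T -> I -> R) :
  cdot w (fun j => \sum_(t <- s | P t) F t j) = \sum_(t <- s | P t) cdot w (F t).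
Proof. by rewrite /cdot; under eq_bigr do rewrite big_distrr; rewrite exchange_big. Qed.

Lemma cdotC_nested w1 w2 (M : I -> I -> R) :
  cdot w1 (fun m => cdot w2 (fun j => M j m)) = cdot w2 (fun j => cdot w1 (fun m => M j m)).
Proof.
rewrite /cdot; under eq_bigr do rewrite big_distrr.
rewrite exchange_big; apply: eq_bigr => j _; rewrite big_distrr; apply: eq_bigr => m _.
by rewrite /=; ring.
Qed.

Lemma cdot_delta w (c : I) (s : R) : cdot w (fun m => (c == m)%:R * s) = w c * s.
Proof.
rewrite /cdot (bigD1 c) //= eqxx mul1r big1 ?addr0 // => j jc.
by rewrite eq_sym (negbTE jc) mul0r mulr0.
Qed.

Lemma cdot_linear (G : pt -> R) :
  (forall (h : R) z1 z2, G (h *: z1 + z2) = h * G z1 + G z2) ->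
  forall w, cdot w (fun m => G (ev m)) = G (\row_j w j).
Proof.
move=> hG w.
have G0 : G 0 = 0.
  by apply: (addIr (G 0)); rewrite add0r -{1}(mul1r (G 0)) -hG scale1r addr0.
have -> : (\row_j w j : pt) = \sum_(j : I) w j *: ev j.
  apply/matrixP => a b; rewrite !mxE summxE (bigD1 b) //= big1 ?addr0.
    by rewrite !mxE (ord1 a) !eqxx mulr1.
  by move=> j jb; rewrite !mxE [b == j]eq_sym (negbTE jb) andbF mulr0.
rewrite /cdot; elim: (index_enum I) => [|j s IH]; first by rewrite !big_nil G0.
by rewrite !big_cons hG IH.
Qed.

End Coordinates.

Section Operators.
Variables (R : realType) (n : nat).
Local Notation pt := (pt R n).
Local Notation sym := (sym R n).
Local Notation I := ('I_(dimM n)).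
Local Notation ev := (@ev R n).
Local Notation inR := (@inR R n).
Local Notation qi := (@qi n).
Local Notation pi_ := (@pi_ n).
Local Notation ti := (@ti n).

(* D and i(alpha) as first-order operators: [Dop S x xi] pairs [D_coef x xi] with
   the x-gradient of S, and [ialpha S x xi] pairs [ialpha_coef x] with the
   xi-gradient; [ialpha_coef] is affine in x with linear part [ialpha_coef_lin]. *)
Definition D_coef (x v : pt) := coordvec (fun i => - v 0 (pi_ i) + v 0 ti * x 0 (qi i))
  (fun i => v 0 (qi i) + v 0 ti * x 0 (pi_ i)) (- Esxi x v).
Definition ialpha_coef (v : pt) :=
  coordvec (fun i => 2^-1 * v 0 (pi_ i)) (fun i => - (2^-1 * v 0 (qi i))) (- 2^-1).
Definition ialpha_coef_lin (v : pt) :=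
  coordvec (fun i => 2^-1 * v 0 (pi_ i)) (fun i => - (2^-1 * v 0 (qi i))) 0.

Lemma DopE (S : sym) x xi : Dop S x xi = cdot (D_coef x xi) (fun j => dx j S x xi).
Proof.
rewrite cdot_coordvec /Dop /Es.
have -> : \sum_(i < n) (- xi 0 (pi_ i) + xi 0 ti * x 0 (qi i)) * dx (qi i) S x xi +
    \sum_(i < n) (xi 0 (qi i) + xi 0 ti * x 0 (pi_ i)) * dx (pi_ i) S x xi =
    \sum_(i < n) (xi 0 (qi i) * dx (pi_ i) S x xi - xi 0 (pi_ i) * dx (qi i) S x xi) +
    xi 0 ti * \sum_(i < n) (x 0 (pi_ i) * dx (pi_ i) S x xi + x 0 (qi i) * dx (qi i) S x xi).
  by rewrite big_distrr -!big_split /=; apply: eq_bigr => i _; ring.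
by ring.
Qed.

Lemma ialphaE (S : sym) x xi : ialpha S x xi = cdot (ialpha_coef x) (fun m => dxi m S x xi).
Proof.
rewrite cdot_coordvec /ialpha.
have -> : \sum_(i < n) 2^-1 * x 0 (pi_ i) * dxi (qi i) S x xi +
    \sum_(i < n) - (2^-1 * x 0 (qi i)) * dxi (pi_ i) S x xi =
    2^-1 * \sum_(i < n) (x 0 (pi_ i) * dxi (qi i) S x xi - x 0 (qi i) * dxi (pi_ i) S x xi).
  by rewrite big_distrr -!big_split /=; apply: eq_bigr => i _; ring.
by ring.
Qed.

Lemma Esxi_lin x (h : R) (z1 z2 : pt) : Esxi x (h *: z1 + z2) = h * Esxi x z1 + Esxi x z2.
Proof.
by rewrite /Esxi big_distrr -big_split /=; apply: eq_bigr => i _; rewrite !mxE; ring.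
Qed.

Lemma D_coef_lin x j (h : R) (z1 z2 : pt) :
  D_coef x (h *: z1 + z2) j = h * D_coef x z1 j + D_coef x z2 j.
Proof. by apply: coordvec_lin => [i|i|]; rewrite ?Esxi_lin ?mxE; ring. Qed.

Lemma ialpha_coef_lin_lin j (h : R) (z1 z2 : pt) :
  ialpha_coef_lin (h *: z1 + z2) j = h * ialpha_coef_lin z1 j + ialpha_coef_lin z2 j.
Proof. by apply: coordvec_lin => [i|i|]; rewrite ?mxE; ring. Qed.

Lemma ialpha_coef_affine j (h : R) (z1 z2 : pt) :
  ialpha_coef (h *: z1 + z2) j = h * ialpha_coef_lin z1 j + ialpha_coef z2 j.
Proof. by apply: coordvec_lin => [i|i|]; rewrite ?mxE; ring. Qed.

Lemma cdot_D_coef_lin x d (h : R) (z1 z2 : pt) :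
  cdot (D_coef x (h *: z1 + z2)) d = h * cdot (D_coef x z1) d + cdot (D_coef x z2) d.
Proof.
rewrite /cdot big_distrr -big_split /=.
by apply: eq_bigr => j _; rewrite D_coef_lin; ring.
Qed.

Lemma cdot_ialpha_coef_lin_lin e (h : R) (z1 z2 : pt) :
  cdot (ialpha_coef_lin (h *: z1 + z2)) e =
  h * cdot (ialpha_coef_lin z1) e + cdot (ialpha_coef_lin z2) e.
Proof.
rewrite /cdot big_distrr -big_split /=.
by apply: eq_bigr => j _; rewrite ialpha_coef_lin_lin; ring.
Qed.

Lemma D_coef_ialpha_coef x d : cdot (D_coef x (\row_j ialpha_coef x j)) d = 0.
Proof.
rewrite cdot_coordvec !mxE /ialpha_coef coordvec_t.
have -> : Esxi x (\row_j coordvec (fun i => 2^-1 * x 0 (pi_ i))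
    (fun i => - (2^-1 * x 0 (qi i))) (- 2^-1) j) = 0.
  by rewrite /Esxi big1 // => i _; rewrite !mxE coordvec_p coordvec_q; ring.
by rewrite !big1 //; [ring | |] => i _; rewrite !mxE ?coordvec_p ?coordvec_q; ring.
Qed.

Lemma ialpha_coef_lin_D_coef x xi e :
  cdot (ialpha_coef_lin (\row_j D_coef x xi j)) e =
  2^-1 * cdot (fun j => xi 0 j) e + xi 0 ti * cdot (ialpha_coef x) e.
Proof.
rewrite cdot_coordvec /cdot sum_coords -/(cdot _ _) cdot_coordvec.
under eq_bigr => i _ do rewrite !mxE /D_coef coordvec_p.
under [X in _ + X + _]eq_bigr => i _ do rewrite !mxE /D_coef coordvec_q.
have -> : \sum_(i < n) 2^-1 * (xi 0 (qi i) + xi 0 ti * x 0 (pi_ i)) * e (qi i) =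
    2^-1 * \sum_(i < n) xi 0 (qi i) * e (qi i) +
    xi 0 ti * \sum_(i < n) 2^-1 * x 0 (pi_ i) * e (qi i).
  by rewrite !big_distrr -big_split /=; apply: eq_bigr => i _; ring.
have -> : \sum_(i < n) - (2^-1 * (- xi 0 (pi_ i) + xi 0 ti * x 0 (qi i))) * e (pi_ i) =
    2^-1 * \sum_(i < n) xi 0 (pi_ i) * e (pi_ i) +
    xi 0 ti * \sum_(i < n) - (2^-1 * x 0 (qi i)) * e (pi_ i).
  by rewrite !big_distrr -big_split /=; apply: eq_bigr => i _; ring.
by ring.
Qed.

Lemma derive_affine (G L : pt -> R) :
  (forall (h : R) z1 z2, G (h *: z1 + z2) = h * L z1 + G z2) ->
  forall xi v : pt, derivable G xi v /\ derive G xi v = L v.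
Proof.
move=> hG xi v.
have quot : \forall h \near dnbhs (0:R), h^-1 *: ((G \o shift xi) (h *: v) - G xi) = L v.
  near=> h; have hn : h != 0 by near: h; exact: nbhs_dnbhs_neq.
  by rewrite /= hG addrK /GRing.scale /= mulrA mulVf // mul1r.
split; last exact: lim_near_cst quot.
by apply/cvg_ex; exists (L v); exact: cvg_near_cst quot.
Unshelve. all: by end_near.
Qed.

Lemma derive_cdot_affine (W L F : I -> pt -> R) :
  (forall j (h : R) z1 z2, W j (h *: z1 + z2) = h * L j z1 + W j z2) ->
  forall xi v : pt, (forall j, derivable (F j) xi v) ->
  derive (fun z => cdot (fun j => W j z) (fun j => F j z)) xi v =
    cdot (fun j => W j xi) (fun j => derive (F j) xi v) +
    cdot (fun j => L j v) (fun j => F j xi).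
Proof.
move=> hW xi v hF; have dW j := derive_affine (hW j) xi v.
rewrite /cdot derive_bigsum => [|j _]; last first.
  by apply: derivableM; [exact: (dW j).1 | exact: hF].
rewrite -big_split /=; apply: eq_bigr => j _.
by rewrite derive_fmul ?(dW j).2; [ring | exact: (dW j).1 | exact: hF].
Qed.

Lemma inR_Es k (S : sym) : inR k S -> inR k (Es S).
Proof.
move=> hS; apply: inR_sum => i _ _.
by apply: inRD; apply: inR_mulx; try exact: smooth_coord; exact: inR_dx.
Qed.

Lemma inR_Dop k (S : sym) : inR k S -> inR k.+1 (Dop S).
Proof.
move=> hS; apply: inRB; first apply: inRD.
- by apply: inR_sum => i _ _; apply: inRB; apply: inR_mulxi; exact: inR_dx.
- by apply: inR_mulxi; exact: inR_Es.
apply: (@inR_ext _ _ _ _ (fun x xi => \sum_(i < n) (x 0 (pi_ i) * (xi 0 (pi_ i) * dx ti S x xi)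
   + x 0 (qi i) * (xi 0 (qi i) * dx ti S x xi)))).
  by move=> x xi; rewrite /Esxi big_distrl /=; apply: eq_bigr => i _; ring.
apply: inR_sum => i _ _; apply: inRD; apply: inR_mulx; try exact: smooth_coord;
  by apply: inR_mulxi; exact: inR_dx.
Qed.

Lemma inR_ialpha k (S : sym) : inR k S -> inR k.-1 (ialpha S).
Proof.
move=> hS; apply: inRZ; apply: inRB; last exact: inR_dxi.
apply: inR_sum => i _ _; apply: inRB; apply: inR_mulx; try exact: smooth_coord;
  exact: inR_dxi.
Qed.

Lemma inR_Xop k delta m (S : sym) : inR k S -> inR k.+1 (Xop delta m S).
Proof.
move=> hS; apply: inRD; first exact: inR_Dop.
apply: (@inR_ext _ _ _ _ (fun x xi => xi 0 ti * ((2 * (n.+1)%:R * delta + m%:R) * S x xi))).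
  by move=> x xi; ring.
by apply: inR_mulxi; exact: inRZ.
Qed.

Lemma dxi_Dop k (S : sym) m x xi : inR k S ->
  dxi m (Dop S) x xi = cdot (D_coef x xi) (fun j => dx j (dxi m S) x xi) +
                       cdot (D_coef x (ev m)) (fun j => dx j S x xi).
Proof.
move=> hS.
have -> : dxi m (Dop S) x xi =
    derive (fun z => cdot (fun j => D_coef x z j) (fun j => dx j S x z)) xi (ev m).
  by rewrite /dxi; congr derive; apply: funext => z; exact: DopE.
rewrite (derive_cdot_affine (W := fun j z => D_coef x z j) (L := fun j z => D_coef x z j)
    (F := fun j z => dx j S x z)).
- have E j : dx j (dxi m S) x xi = derive (fun z => dx j S x z) xi (ev m).
    by rewrite -(dxi_dx j m x xi hS).
  by rewrite [in RHS](eq_cdot (D_coef x xi) E).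
- by move=> j h z1 z2; rewrite D_coef_lin.
- by move=> j; exact: derivable_inR_xi (inR_dx j hS).
Qed.

Lemma dx_ialpha k (S : sym) j x xi : inR k S ->
  dx j (ialpha S) x xi = cdot (ialpha_coef x) (fun m => dx j (dxi m S) x xi) +
                         cdot (ialpha_coef_lin (ev j)) (fun m => dxi m S x xi).
Proof.
move=> hS.
have -> : dx j (ialpha S) x xi =
    derive (fun y => cdot (fun m => ialpha_coef y m) (fun m => dxi m S y xi)) x (ev j).
  by rewrite /dx; congr derive; apply: funext => y; exact: ialphaE.
rewrite (derive_cdot_affine (W := fun m y => ialpha_coef y m)
    (L := fun m y => ialpha_coef_lin y m) (F := fun m y => dxi m S y xi)) //.
- by move=> m h z1 z2; rewrite ialpha_coef_affine.
- by move=> m; exact: derivable_inR_x (inR_dxi m hS).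
Qed.

Lemma dxi_Xop k delta m' (S : sym) m x xi : inR k S ->
  dxi m (Xop delta m' S) x xi = dxi m (Dop S) x xi +
    (2 * (n.+1)%:R * delta + m'%:R) * ((ti == m)%:R * S x xi + xi 0 ti * dxi m S x xi).
Proof.
move=> hS; rewrite /dxi /Xop.
set C := 2 * (n.+1)%:R * delta + m'%:R.
have dS := @derivable_inR_xi _ _ k S x xi (ev m) hS.
have dt : derivable (fun z : pt => C * z 0 ti) xi (ev m).
  by apply: derivableM; [exact: derivable_cst | exact: derivable_coord].
rewrite deriveD; last 2 first.
- exact: derivable_inR_xi (inR_Dop hS).
- exact: derivableM.
rewrite derive_fmul // deriveMl ?derive_coord ?evE; last exact: derivable_coord.
by ring.
Qed.

Lemma ialpha_inR0 (S : sym) x xi : inR 0 S -> ialpha S x xi = 0.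
Proof.
move=> hS; rewrite ialphaE -[RHS](cdot0 (ialpha_coef x)); apply: eq_cdot => m.
exact: dxi_inR0.
Qed.

Lemma Dop0 (x xi : pt) : Dop (fun (_ _ : pt) => 0 : R) x xi = 0.
Proof.
rewrite DopE -[RHS](cdot0 (D_coef x xi)); apply: eq_cdot => j.
by rewrite /dx derive_cst.
Qed.

End Operators.

Definition homogeneous (R : realType) (n : nat) (S : sym R n) := exists k, inR k S.

Section Commutation.
Variables (R : realType) (n : nat) (delta : R).
Local Notation pt := (pt R n).
Local Notation sym := (sym R n).
Local Notation ev := (@ev R n).
Local Notation inR := (@inR R n).
Local Notation ti := (@ti n).
Local Notation c0 := (2 * (n.+1)%:R * delta).

(* Both sides are expanded in first-order terms; the second-order terms cancel
   because dx and dxi commute, and Euler's identity turns the remaining pairing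
   of xi with the xi-gradient into the degree k. *)
Lemma ialpha_Xop k m (S : sym) x xi : inR k S ->
  ialpha (Xop delta m S) x xi = Dop (ialpha S) x xi +
    (c0 + m%:R - 1) * xi 0 ti * ialpha S x xi - 2^-1 * (k%:R + c0 + m%:R) * S x xi.
Proof.
move=> hS.
have DialphaE : Dop (ialpha S) x xi =
    cdot (D_coef x xi) (fun j => cdot (ialpha_coef x) (fun m' => dx j (dxi m' S) x xi)) +
    (2^-1 * cdot (fun j => xi 0 j) (fun m' => dxi m' S x xi) + xi 0 ti * ialpha S x xi).
  rewrite DopE; under eq_cdot => j do rewrite (dx_ialpha j x xi hS).
  rewrite cdotD
    (@cdot_linear _ _ (fun v => cdot (ialpha_coef_lin v) (fun m' => dxi m' S x xi))).
    by rewrite ialpha_coef_lin_D_coef -ialphaE.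
  by move=> h z1 z2; rewrite cdot_ialpha_coef_lin_lin.
have euler : cdot (fun j => xi 0 j) (fun m' => dxi m' S x xi) = k%:R * S x xi.
  exact: euler_inR.
rewrite DialphaE euler ialphaE.
under eq_cdot => m' do rewrite (dxi_Xop delta m m' x xi hS) (dxi_Dop m' x xi hS).
rewrite !cdotD (@cdot_linear _ _ (fun v => cdot (D_coef x v) (fun j => dx j S x xi)));
  last first.
  by move=> h z1 z2; rewrite cdot_D_coef_lin.
rewrite D_coef_ialpha_coef cdotZ cdotD cdot_delta cdotZ -ialphaE cdotC_nested.
have -> : ialpha_coef x ti = - 2^-1 by rewrite /ialpha_coef coordvec_t.
set A := cdot _ _; set I0 := ialpha S x xi.
by ring.
Qed.

Lemma dx_sumZ (T : Type) (s : seq T) (P : pred T) (a : T -> R) (F : T -> sym) j x xi :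
  (forall t, P t -> homogeneous (F t)) ->
  dx j (fun x xi => \sum_(t <- s | P t) a t * F t x xi) x xi =
  \sum_(t <- s | P t) a t * dx j (F t) x xi.
Proof.
move=> hF; have dF t : P t -> derivable (fun y => F t y xi) x (ev j).
  by move=> Pt; have [k hk] := hF t Pt; exact: derivable_inR_x hk.
rewrite /dx derive_bigsum => [|t Pt]; last first.
  by apply: derivableM; [exact: derivable_cst | exact: dF].
by apply: eq_bigr => t Pt; rewrite deriveMl //; exact: dF.
Qed.

Lemma dxi_sumZ (T : Type) (s : seq T) (P : pred T) (a : T -> R) (F : T -> sym) j x xi :
  (forall t, P t -> homogeneous (F t)) ->
  dxi j (fun x xi => \sum_(t <- s | P t) a t * F t x xi) x xi =
  \sum_(t <- s | P t) a t * dxi j (F t) x xi.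
Proof.
move=> hF; have dF t : P t -> derivable (fun z => F t x z) xi (ev j).
  by move=> Pt; have [k hk] := hF t Pt; exact: derivable_inR_xi hk.
rewrite /dxi derive_bigsum => [|t Pt]; last first.
  by apply: derivableM; [exact: derivable_cst | exact: dF].
by apply: eq_bigr => t Pt; rewrite deriveMl //; exact: dF.
Qed.

Lemma Xop_sumZ m (T : Type) (s : seq T) (P : pred T) (a : T -> R) (F : T -> sym) :
  (forall t, P t -> homogeneous (F t)) ->
  Xop delta m (fun x xi => \sum_(t <- s | P t) a t * F t x xi) =
  fun x xi => \sum_(t <- s | P t) a t * Xop delta m (F t) x xi.
Proof.
move=> hF; apply: funext => x; apply: funext => xi.
rewrite /Xop DopE (eq_cdot _ (fun j => @dx_sumZ T s P a F j x xi hF)) cdot_sum.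
rewrite !big_distrr -big_split /=; apply: eq_bigr => t Pt.
by rewrite cdotZ -DopE; ring.
Qed.

Lemma ialpha_sumZ (T : Type) (s : seq T) (P : pred T) (a : T -> R) (F : T -> sym) :
  (forall t, P t -> homogeneous (F t)) ->
  ialpha (fun x xi => \sum_(t <- s | P t) a t * F t x xi) =
  fun x xi => \sum_(t <- s | P t) a t * ialpha (F t) x xi.
Proof.
move=> hF; apply: funext => x; apply: funext => xi.
rewrite ialphaE (eq_cdot _ (fun j => @dxi_sumZ T s P a F j x xi hF)) cdot_sum.
by apply: eq_bigr => t Pt; rewrite cdotZ -ialphaE.
Qed.

Lemma dx_addZ (A B : sym) (c : R) j x xi : homogeneous A -> homogeneous B ->
  dx j (fun x xi => A x xi + c * B x xi) x xi = dx j A x xi + c * dx j B x xi.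
Proof.
move=> [k1 hA] [k2 hB]; rewrite /dx.
have dA := derivable_inR_x (xi := xi) (x := x) (v := ev j) hA.
have dB := derivable_inR_x (xi := xi) (x := x) (v := ev j) hB.
rewrite deriveD ?deriveMl //; apply: derivableM => //; exact: derivable_cst.
Qed.

Lemma dxi_addZ (A B : sym) (c : R) j x xi : homogeneous A -> homogeneous B ->
  dxi j (fun x xi => A x xi + c * B x xi) x xi = dxi j A x xi + c * dxi j B x xi.
Proof.
move=> [k1 hA] [k2 hB]; rewrite /dxi.
have dA := derivable_inR_xi (x := x) (xi := xi) (v := ev j) hA.
have dB := derivable_inR_xi (x := x) (xi := xi) (v := ev j) hB.
rewrite deriveD ?deriveMl //; apply: derivableM => //; exact: derivable_cst.
Qed.

Lemma Xop_addZ m (A B : sym) (c : R) : homogeneous A -> homogeneous B ->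
  Xop delta m (fun x xi => A x xi + c * B x xi) =
  fun x xi => Xop delta m A x xi + c * Xop delta m B x xi.
Proof.
move=> hA hB; apply: funext => x; apply: funext => xi.
rewrite /Xop DopE (eq_cdot _ (fun j => dx_addZ c j x xi hA hB)) cdotD cdotZ -!DopE.
by ring.
Qed.

Lemma ialpha_addZ (A B : sym) (c : R) : homogeneous A -> homogeneous B ->
  ialpha (fun x xi => A x xi + c * B x xi) = fun x xi => ialpha A x xi + c * ialpha B x xi.
Proof.
move=> hA hB; apply: funext => x; apply: funext => xi.
by rewrite ialphaE (eq_cdot _ (fun j => dxi_addZ c j x xi hA hB)) cdotD cdotZ -!ialphaE.
Qed.

Lemma ialpha0 : ialpha (fun _ _ => 0 : R) = (fun (_ _ : pt) => 0 : R).
Proof.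
apply: funext => x; apply: funext => xi.
by rewrite ialphaE -[RHS](cdot0 (ialpha_coef x)); apply: eq_cdot => m; rewrite /dxi derive_cst.
Qed.

Lemma Xop0 m : Xop delta m (fun _ _ => 0 : R) = (fun (_ _ : pt) => 0 : R).
Proof. by apply: funext => x; apply: funext => xi; rewrite /Xop Dop0 mulr0 addr0. Qed.

Lemma Xit0 m l : Xit delta m l (fun _ _ => 0 : R) = (fun (_ _ : pt) => 0 : R).
Proof. by elim: l => [//|l IH] /=; rewrite IH Xop0. Qed.

Lemma iter_ialpha0 l : iter l (@ialpha R n) (fun _ _ => 0 : R) = (fun (_ _ : pt) => 0 : R).
Proof. by elim: l => [//|l IH] /=; rewrite IH ialpha0. Qed.

Lemma inR_iter_ialpha k l (S : sym) : inR k S -> inR (k - l) (iter l (@ialpha R n) S).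
Proof.
move=> hS; elim: l => [|l IH]; first by rewrite subn0.
by rewrite iterS subnS; exact: inR_ialpha.
Qed.

Lemma inR_Xit k m l (S : sym) : inR k S -> inR (k + l) (Xit delta m l S).
Proof.
move=> hS; elim: l => [|l IH]; first by rewrite addn0.
by rewrite /= addnS; exact: inR_Xop.
Qed.

Lemma ialpha_XopE k (S : sym) : inR k S ->
  ialpha (Xop delta k S) =
  fun x xi => Xop delta (k - 1) (ialpha S) x xi + r n delta 1 k * S x xi.
Proof.
move=> hS; apply: funext => x; apply: funext => xi; rewrite (ialpha_Xop k x xi hS).
case: k hS => [|k] hS; last by rewrite /Xop /r subn1 /= -addn1 natrD; ring.
have -> : ialpha S = fun _ _ => 0.
  by apply: funext => y; apply: funext => z; exact: ialpha_inR0.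
by rewrite Dop0 Xop0 /r; ring.
Qed.

Lemma rS l m : r n delta l.+2 m = r n delta l.+1 m + r n delta 1 (m + l.+1).
Proof. by rewrite /r natrD !mulrSr mulr0n; ring. Qed.

Lemma ialpha_Xit m l (S : sym) : inR m S -> (0 < l)%N ->
  ialpha (Xit delta m l S) =
  fun x xi => Xit delta (m - 1) l (ialpha S) x xi + r n delta l m * Xit delta m l.-1 S x xi.
Proof.
move=> hS; case: l => [//|l] _; elim: l => [|l IH].
  by rewrite /= !addn0 (ialpha_XopE hS).
rewrite [Xit delta m l.+2 S]/= (ialpha_XopE (inR_Xit m l.+1 hS)) IH.
have h1 : homogeneous (Xit delta (m - 1) l.+1 (ialpha S)).
  by exists (m.-1 + l.+1)%N; apply: inR_Xit; exact: inR_ialpha.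
have h2 : homogeneous (Xit delta m l S) by exists (m + l)%N; exact: inR_Xit.
rewrite (Xop_addZ _ _ h1 h2).
have -> : Xop delta (m + l.+1 - 1) (Xit delta (m - 1) l.+1 (ialpha S)) =
    Xit delta (m - 1) l.+2 (ialpha S).
  case: m hS {IH h1 h2} => [|m] hS; last by rewrite [RHS]/= !subn1.
  have -> : ialpha S = fun _ _ => 0.
    by apply: funext => y; apply: funext => z; exact: ialpha_inR0.
  by rewrite !Xit0 Xop0.
apply: funext => x; apply: funext => xi; rewrite rS /=.
have -> : (m + l.+1 - 1 = m + l)%N by lia.
by ring.
Qed.

End Commutation.

Section Decomposition.
Variables (R : realType) (n : nat) (delta : R).
Local Notation pt := (pt R n).
Local Notation sym := (sym R n).
Local Notation inR := (@inR R n).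
Local Notation homogeneous := (@homogeneous R n).
Local Notation ia := (@ialpha R n).
Local Notation Xit := (@Xit R n delta).
Local Notation sop := (@sop R n delta).
Local Notation scomp := (@scomp R n delta).
Local Notation r := (r n delta).
Local Notation b := (b n delta).

Lemma inR_sop j (S : sym) : inR j.-1 S -> inR j (sop j S).
Proof.
move=> hS; apply: inRN; apply: inR_sum => l; rewrite mem_index_iota => /andP [h1 h2] _.
apply: inRZ; have := inR_Xit delta (j - l) l (inR_iter_ialpha l.-1 hS).
by have -> : (j.-1 - l.-1 + l = j)%N by lia.
Qed.

Lemma inR_scomp m l (S : sym) : inR m S -> inR (m + l) (scomp m l S).
Proof.
move=> hS; elim: l => [|l IH]; first by rewrite addn0.
by rewrite /= addnS; apply: inR_sop.
Qed.

Lemma homogeneous_iter_ialpha l S : homogeneous S -> homogeneous (iter l ia S).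
Proof. by move=> [k hk]; exists (k - l)%N; exact: inR_iter_ialpha. Qed.

Lemma homogeneous_Xit m l S : homogeneous S -> homogeneous (Xit m l S).
Proof. by move=> [k hk]; exists (k + l)%N; exact: inR_Xit. Qed.

Lemma iter_ialpha_sumZ l (T : Type) (s : seq T) (P : pred T) (a : T -> R) (F : T -> sym) :
  (forall t, P t -> homogeneous (F t)) ->
  iter l ia (fun x xi => \sum_(t <- s | P t) a t * F t x xi) =
  fun x xi => \sum_(t <- s | P t) a t * iter l ia (F t) x xi.
Proof.
move=> hF; elim: l => [//|l IH]; rewrite iterS IH ialpha_sumZ // => t Pt.
exact/homogeneous_iter_ialpha/hF.
Qed.

Lemma Xit_sumZ m l (T : Type) (s : seq T) (P : pred T) (a : T -> R) (F : T -> sym) :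
  (forall t, P t -> homogeneous (F t)) ->
  Xit m l (fun x xi => \sum_(t <- s | P t) a t * F t x xi) =
  fun x xi => \sum_(t <- s | P t) a t * Xit m l (F t) x xi.
Proof.
move=> hF; elim: l => [//|l IH] /=; rewrite IH Xop_sumZ // => t Pt.
exact/homogeneous_Xit/hF.
Qed.

Lemma sop_sumZ j (T : Type) (s : seq T) (P : pred T) (a : T -> R) (F : T -> sym) :
  (forall t, P t -> homogeneous (F t)) ->
  sop j (fun x xi => \sum_(t <- s | P t) a t * F t x xi) =
  fun x xi => \sum_(t <- s | P t) a t * sop j (F t) x xi.
Proof.
move=> hF; apply: funext => x; apply: funext => xi; rewrite /Defs.sop.
have hiF l t : P t -> homogeneous (iter l ia (F t)).
  by move=> Pt; exact/homogeneous_iter_ialpha/hF.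
under eq_bigr => l _ do
  rewrite (@iter_ialpha_sumZ _ T s P a F hF)
    (@Xit_sumZ _ _ T s P a (fun t => iter _ ia (F t)) (hiF _)) big_distrr.
rewrite exchange_big /= -sumrN; apply: eq_bigr => t Pt.
by rewrite mulrN big_distrr /=; congr (- _); apply: eq_bigr => l _; rewrite mulrCA.
Qed.

Lemma sop0 j : sop j (fun _ _ => 0 : R) = (fun (_ _ : pt) => 0 : R).
Proof.
apply: funext => x; apply: funext => xi; rewrite /Defs.sop big1 ?oppr0 // => l _.
by rewrite iter_ialpha0 Xit0 mulr0.
Qed.

Lemma b0 j : b j 0 = 1.
Proof. by rewrite /Defs.b big_geq // invr1. Qed.

Lemma bS j l : r l.+1 (j - l.+1) != 0 -> b j l.+1 * (- r l.+1 (j - l.+1)) = b j l.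
Proof.
move=> hr; rewrite /Defs.b big_nat_recr //=.
set P := \prod_(1 <= m < l.+1) _.
have [->|hP] := eqVneq P 0; first by rewrite mul0r invr0 mul0r.
by field; apply/andP; split => //; rewrite oppr_eq0.
Qed.

(* One step of the telescoping sum behind [ialpha_sop]. *)
Lemma ialpha_sop_term j l (S : sym) x xi : inR j.-1 S -> (1 <= l <= j)%N ->
  r l (j - l) != 0 ->
  - b j l * ia (Xit (j - l) l (iter l.-1 ia S)) x xi =
  b j l.-1 * Xit (j.-1 - l.-1) l.-1 (iter l.-1 ia S) x xi
  - b j l * Xit (j.-1 - l) l (iter l ia S) x xi.
Proof.
case: l => [//|l] hS /andP [_ hl] hr; rewrite !succnK.
have hT : inR (j - l.+1) (iter l ia S).
  by have := inR_iter_ialpha l hS; have -> : (j.-1 - l = j - l.+1)%N by lia.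
rewrite (ialpha_Xit delta hT) // -iterS.
have -> : (j - l.+1 - 1 = j.-1 - l.+1)%N by lia.
have -> : (j.-1 - l = j - l.+1)%N by lia.
by rewrite -(bS hr); ring.
Qed.

Lemma ialpha_sop j (S : sym) : (1 <= j)%N -> inR j.-1 S ->
  (forall l, (1 <= l <= j)%N -> r l (j - l) != 0) -> ia (sop j S) = S.
Proof.
move=> hj hS hr.
have iterS0 : iter j ia S = fun _ _ => 0.
  case: j hj hS {hr} => [//|j] _ hS; rewrite iterS; apply: funext => y; apply: funext => z.
  by have := inR_iter_ialpha j hS; rewrite subnn; exact: ialpha_inR0.
pose A p := Xit (j.-1 - p) p (iter p ia S).
have hF l : homogeneous (Xit (j - l) l (iter l.-1 ia S)).
  by apply/homogeneous_Xit/homogeneous_iter_ialpha; exists j.-1.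
have -> : sop j S = fun x xi =>
    \sum_(1 <= l < j.+1) (- b j l) * Xit (j - l) l (iter l.-1 ia S) x xi.
  apply: funext => x; apply: funext => xi; rewrite /Defs.sop -sumrN.
  by apply: eq_bigr => l _; rewrite mulNr.
rewrite ialpha_sumZ //; apply: funext => x; apply: funext => xi.
rewrite (telescope_sumr_eq (fun l => - (b j l.-1 * A l.-1 x xi)) _) //; last first.
  by move=> l hl; rewrite ialpha_sop_term ?hr // opprK addrC.
by rewrite /A /= iterS0 Xit0 /= b0 mulr0 oppr0 sub0r opprK mul1r.
Qed.

(* Ensures that no b_{j,l} with j <= k is the junk inverse of 0. *)
Definition r_nonvanishing k :=
  forall j l, (1 <= l <= j)%N -> (j <= k)%N -> r l (j - l) != 0.

Lemma r_nonvanishingW k : r_nonvanishing k.+1 -> r_nonvanishing k.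
Proof. by move=> hr j l hl hj; apply: hr => //; exact: leqW. Qed.

(* r(l, j - l) = -(l/2) (2(n+1) delta + (2j - l - 1)), so it vanishes exactly at
   delta = -p/(2(n+1)) with p = 2j - l - 1, which ranges over {j-1, ..., 2j-2}. *)
Lemma r_nonvanishing_delta k :
  (forall j p : nat, (1 <= j <= k)%N -> (j - 1 <= p <= 2 * j - 2)%N ->
     delta != - (p%:R / (2 * (n.+1)%:R))) ->
  r_nonvanishing k.
Proof.
move=> hdelta j l /andP [h1 h2] hjk; set p := (2 * j - l - 1)%N.
apply: contra (hdelta j p ltac:(lia) ltac:(lia)) => /eqP hr; apply/eqP.
have hl : (l%:R / 2 : R) != 0 by rewrite mulf_neq0 // ?invr_eq0 ?pnatr_eq0; lia.
move: hr; rewrite /Defs.r mulNr => /eqP; rewrite oppr_eq0 mulf_eq0 (negbTE hl) /= => /eqP hr.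
have ep : p%:R = 2 * (j - l)%:R + l%:R - 1 :> R.
  apply/eqP; rewrite eq_sym subr_eq -[1 in X in _ == X]/(1%:R) -natrD addn1.
  by rewrite -natrM -natrD; apply/eqP; congr _%:R; rewrite /p; lia.
have hn0 : (2 * (n.+1)%:R : R) != 0 by rewrite mulf_neq0 // pnatr_eq0.
apply: (mulfI hn0); rewrite mulrN [_ * (_ / _)]mulrC divfK // ep.
by apply/eqP; rewrite -subr_eq0 opprK !addrA; exact/eqP.
Qed.

Lemma ialpha_scompS m l (T : sym) : inR m T -> r_nonvanishing (m + l).+1 ->
  ia (scomp m l.+1 T) = scomp m l T.
Proof.
move=> hT hr; apply: ialpha_sop => //; first exact: inR_scomp.
by move=> l' hl'; apply: hr.
Qed.

Definition decomp k (T : nat -> sym) : sym :=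
  fun x xi => \sum_(l < k.+1) scomp (k - l) l (T l) x xi.

Definition primitive_family k (T : nat -> sym) :=
  forall l, (l <= k)%N -> inR (k - l) (T l) /\ (forall x xi, ia (T l) x xi = 0).

Lemma homogeneous_scomp_family k (T : nat -> sym) :
  (forall l, (l <= k)%N -> inR (k - l) (T l)) ->
  forall (l : 'I_k.+1) m, homogeneous (scomp (k - l) m (T l)).
Proof. by move=> hT l m; exists (k - l + m)%N; apply/inR_scomp/hT; exact: (ltn_ord l). Qed.

Lemma ialpha_decomp k (T : nat -> sym) :
  primitive_family k.+1 T -> r_nonvanishing k.+1 ->
  ia (decomp k.+1 T) = decomp k (fun l => T l.+1).
Proof.
move=> hT hr; have hom := homogeneous_scomp_family (fun l hl => (hT l hl).1).
have -> : decomp k.+1 T =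
    fun x xi => \sum_(l < k.+2) 1 * scomp (k.+1 - l) l (T l) x xi.
  by apply: funext => x; apply: funext => xi; under eq_bigr do rewrite mul1r.
rewrite ialpha_sumZ; last by move=> l _; exact: hom.
apply: funext => x; apply: funext => xi.
rewrite /decomp big_ord_recl /= mul1r (hT 0%N isT).2 add0r.
apply: eq_bigr => l _; rewrite mul1r /bump /= add0n add1n subSS ialpha_scompS //.
  exact: (hT l.+1 (ltn_ord l)).1.
by rewrite subnK; [exact: hr | exact: (ltn_ord l)].
Qed.

Lemma sop_decomp k (U : nat -> sym) : (forall l, (l <= k)%N -> inR (k - l) (U l)) ->
  sop k.+1 (decomp k U) = fun x xi => \sum_(l < k.+1) scomp (k - l) l.+1 (U l) x xi.
Proof.
move=> hU; have hom := homogeneous_scomp_family hU.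
have -> : decomp k U = fun x xi => \sum_(l < k.+1) 1 * scomp (k - l) l (U l) x xi.
  by apply: funext => x; apply: funext => xi; under eq_bigr do rewrite mul1r.
rewrite sop_sumZ; last by move=> l _; exact: hom.
apply: funext => x; apply: funext => xi; apply: eq_bigr => l _.
by rewrite mul1r [RHS]/= subnK //; exact: (ltn_ord l).
Qed.

Lemma decomp_spans k (S : sym) : r_nonvanishing k -> inR k S ->
  exists T, primitive_family k T /\ forall x xi, S x xi = decomp k T x xi.
Proof.
elim: k S => [|k IH] S hr hS.
  exists (fun l => if l is 0 then S else fun _ _ => 0); split.
    by case=> // _; split => // x xi; exact: ialpha_inR0.
  by move=> x xi; rewrite /decomp big_ord1.
have [U [hU hUS]] := IH _ (r_nonvanishingW hr) (inR_ialpha hS).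
have sopS : ia (sop k.+1 (ia S)) = ia S.
  apply: ialpha_sop => // [|l hl]; first exact: inR_ialpha hS.
  exact: hr hl (leqnn _).
pose T0 := fun x xi => S x xi + (-1) * sop k.+1 (ia S) x xi.
exists (fun l => if l is l'.+1 then U l' else T0); split.
  case=> [_|l hl]; last by rewrite subSS; exact: hU.
  split; first by apply: inRD => //; apply/inRZ/inR_sop; exact: inR_ialpha hS.
  move=> x xi; rewrite ialpha_addZ /=; last 2 first.
  - by exists k.+1.
  - by exists k.+1; apply: inR_sop; exact: inR_ialpha hS.
  by rewrite sopS mulN1r subrr.
have iaS : ia S = decomp k U by apply: funext => x; apply: funext => xi; exact: hUS.
move=> x xi; rewrite /T0 iaS (sop_decomp (fun l hl => (hU l hl).1)) /decomp big_ord_recl /=.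
under eq_bigr => i _ do rewrite /bump /= ?add0n ?add1n /= ?subSS.
by ring.
Qed.

Lemma decomp_direct k (T : nat -> sym) : r_nonvanishing k -> primitive_family k T ->
  (forall x xi, decomp k T x xi = 0) ->
  forall l, (l <= k)%N -> forall x xi, scomp (k - l) l (T l) x xi = 0.
Proof.
elim: k T => [|k IH] T hr hT hsum.
  by case=> // _ x xi; have := hsum x xi; rewrite /decomp big_ord1.
have hT' : primitive_family k (fun l => T l.+1).
  by move=> l hl; have := hT l.+1 hl; rewrite subSS.
have hsum' x xi : decomp k (fun l => T l.+1) x xi = 0.
  have Z : decomp k.+1 T = fun _ _ => 0.
    by apply: funext => y; apply: funext => z; exact: hsum.
  by rewrite -(ialpha_decomp hT hr) Z ialpha0.
have hz l : (l <= k)%N -> scomp (k.+1 - l.+1) l.+1 (T l.+1) = fun _ _ => 0.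
  move=> hl; rewrite subSS /=.
  have -> : scomp (k - l) l (T l.+1) = fun _ _ => 0.
    apply: funext => x; apply: funext => xi.
    exact: IH (r_nonvanishingW hr) hT' hsum' l hl x xi.
  exact: sop0.
case=> [_|l hl] x xi; last by rewrite hz.
have := hsum x xi; rewrite /decomp big_ord_recl big1 ?addr0 // => i _.
by rewrite lift0 hz //; exact: (ltn_ord i).
Qed.

End Decomposition.

Unset Implicit Arguments.

Theorem corollary5p2 (R : realType) (n : nat) (delta : R) (k : nat) :
  (1 <= n)%N -> (1 <= k)%N ->
  (forall j p : nat, (1 <= j <= k)%N -> (j - 1 <= p <= 2 * j - 2)%N ->
     delta != - (p%:R / (2 * (n.+1)%:R))) ->
  [/\ (forall (l : nat) (T : sym R n), (l <= k)%N ->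
         inR (k - l) T -> (forall x xi, ialpha T x xi = 0) ->
         inR k (scomp delta (k - l) l T)),
      (forall S : sym R n, inR k S ->
         exists T : nat -> sym R n,
           (forall l, (l <= k)%N ->
              inR (k - l) (T l) /\ (forall x xi, ialpha (T l) x xi = 0)) /\
           (forall x xi, S x xi =
              \sum_(l < k.+1) scomp delta (k - l) l (T l) x xi)) &
      (forall T : nat -> sym R n,
         (forall l, (l <= k)%N ->
            inR (k - l) (T l) /\ (forall x xi, ialpha (T l) x xi = 0)) ->
         (forall x xi, \sum_(l < k.+1) scomp delta (k - l) l (T l) x xi = 0) ->
         forall l, (l <= k)%N ->
           forall x xi, scomp delta (k - l) l (T l) x xi = 0)].
Proof.
move=> _ _ hdelta; have hr := r_nonvanishing_delta hdelta; split.
- by move=> l T hl hT _; rewrite -[X in inR X](subnK hl); exact: inR_scomp.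
- by move=> S hS; exact: decomp_spans hr hS.
- by move=> T hT hs; exact: decomp_direct hr hT hs.
Qed.
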